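(* Let $n\ge 1$, let $Z$ be a vector space over $\mathbf{F}_2$, and let $V$ be the $\mathbf{F}_2$-space of all subsets of $I_n=\{1,\dots,n\}$ with addition the symmetric difference $\triangle$ (so the singletons $\{1\},\dots,\{n\}$ form a basis). Then $$Z^2(V,Z)=Z^2_0(V,Z)\oplus B^2(V,Z).$$
   Context: A cocycle is a map $f:V\times V\to Z$ satisfying, for all $v_1,v_2\in V$: $f(0,v_1)=0$, $f(v_1,v_1)=0$, $f(v_1,v_2)=f(v_2,v_1)$ and $f(v_1+v_2,v_2)=f(v_1,v_2)$ (here $0=\emptyset$). $Z^2(V,Z)$ is the $\mathbf{F}_2$-space of all cocycles. $B^2(V,Z)$ is the subspace of maps $\delta(g)(v_1,v_2)=g(v_1+v_2)+g(v_1)+g(v_2)$ where $g:V\to Z$ ranges over functions with $g(0)=0$. $Z^2_0(V,Z)$ is the subspace of cocycles $f$ such that $f(\sigma,\{i\})=0$ for every nonempty $\sigma\subseteq I_n$ and every $i\in I_n$ with $i>\max(\sigma)$. *)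

From HB Require Import structures.
From mathcomp Require Import all_boot all_order all_algebra.
Set Implicit Arguments. Unset Strict Implicit. Unset Printing Implicit Defensive.
Import GRing.Theory.
Local Open Scope ring_scope.

(* V = subsets of I_n = 'I_n (elements 0..n-1 model 1..n, order preserved),
   with addition the symmetric difference. *)
Definition vadd (n : nat) (A B : {set 'I_n}) : {set 'I_n} :=
  (A :\: B) :|: (B :\: A).

Definition cocycle (Z : zmodType) (n : nat)
    (f : {set 'I_n} -> {set 'I_n} -> Z) : Prop :=
  forall v1 v2 : {set 'I_n},
    [/\ f set0 v1 = 0, f v1 v1 = 0, f v1 v2 = f v2 v1
      & f (vadd v1 v2) v2 = f v1 v2].

Definition delta (Z : zmodType) (n : nat) (g : {set 'I_n} -> Z)
    (v1 v2 : {set 'I_n}) : Z :=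
  g (vadd v1 v2) + g v1 + g v2.

Definition coboundary (Z : zmodType) (n : nat)
    (f : {set 'I_n} -> {set 'I_n} -> Z) : Prop :=
  exists g : {set 'I_n} -> Z, g set0 = 0 /\
    forall v1 v2, f v1 v2 = delta g v1 v2.

Definition cocycle0 (Z : zmodType) (n : nat)
    (f : {set 'I_n} -> {set 'I_n} -> Z) : Prop :=
  cocycle f /\
  forall (s : {set 'I_n}) (i : 'I_n),
    s != set0 -> (\max_(j in s) val j < val i)%N -> f s [set i] = 0.

From HB Require Import structures.
From mathcomp Require Import all_boot all_order all_algebra.
Set Implicit Arguments. Unset Strict Implicit. Unset Printing Implicit Defensive.
Import GRing.Theory.
Local Open Scope ring_scope.

(* Every cocycle f is cohomologous to one in Z^2_0: with
   g s := sum_(i in s) f (s_<i, {i}), where s_<i is the part of s below i,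
   adding {i} on top of s gives g (s + {i}) = f (s, {i}) + g s, hence
   (f - delta g)(s, {i}) = 0 whenever i > max s.  Conversely, if delta g lies in
   Z^2_0 then g (s + {i}) = g s + g {i} whenever i > max s, so by induction on
   the largest element g s = sum_(i in s) g {i}; such a g is additive for the
   symmetric difference because Z has characteristic 2, so delta g = 0. *)

Lemma addrr_F2 (Z : lmodType 'F_2) (x : Z) : x + x = 0.
Proof.
have two0 : (1 + 1 : 'F_2) = 0 by apply/val_inj.
by rewrite -{1 2}(scale1r x) -scalerDl two0 scale0r.
Qed.

Lemma oppr_F2 (Z : lmodType 'F_2) (x : Z) : - x = x.
Proof. by apply/eqP; rewrite eq_sym -subr_eq0 opprK addrr_F2. Qed.

Section SymmetricDifference.
Variable n : nat.
Implicit Types (s A B : {set 'I_n}) (i : 'I_n).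

Lemma vaddC A B : vadd A B = vadd B A.
Proof. by rewrite /vadd setUC. Qed.

Lemma vaddK A B : vadd (vadd A B) B = A.
Proof. by apply/setP => x; rewrite !inE; case: (x \in A); case: (x \in B). Qed.

Lemma vadd0s A : vadd set0 A = A.
Proof. by apply/setP => x; rewrite !inE; case: (x \in A). Qed.

Lemma vaddss A : vadd A A = set0.
Proof. by apply/setP => x; rewrite !inE; case: (x \in A). Qed.

Lemma vadd_set1 s i : i \notin s -> vadd s [set i] = i |: s.
Proof.
move=> si; apply/setP => x; rewrite !inE.
by case: (eqVneq x i) => [->|]; rewrite ?(negbTE si) //=; case: (x \in s).
Qed.

Lemma below_notin s i : {in s, forall j : 'I_n, (j < i)%N} -> i \notin s.
Proof. by move=> lt_s; apply/negP => /lt_s; rewrite ltnn. Qed.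

Lemma bigmax_ltP s i : s != set0 ->
  reflect {in s, forall j : 'I_n, (j < i)%N} (\max_(j in s) val j < val i)%N.
Proof.
rewrite -card_gt0 => s_gt0; apply: (iffP idP) => [lt_max j js | lt_s].
  exact: leq_ltn_trans (leq_bigmax_cond (F := val) _ js) lt_max.
by have [k ks ->] := eq_bigmax_cond val s_gt0; apply: lt_s.
Qed.

Lemma set_ind_max (P : {set 'I_n} -> Prop) :
  P set0 ->
  (forall s i, {in s, forall j : 'I_n, (j < i)%N} -> P s -> P (i |: s)) ->
  forall s, P s.
Proof.
move=> P0 PU s; elim: {s}#|s| {-2}s (erefl #|s|) => [|k IH] s cs.
  by move/eqP: cs; rewrite cards_eq0 => /eqP ->.
have s_gt0 : (0 < #|s|)%N by rewrite cs.
have [i si max_i] := eq_bigmax_cond val s_gt0.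
rewrite -(setD1K si); apply: PU; last by apply: IH; move: cs; rewrite (cardsD1 i) si add1n => -[].
move=> j; rewrite !inE => /andP[ji js]; rewrite ltn_neqAle val_eqE ji /=.
by rewrite -max_i (leq_bigmax_cond (F := val) _ js).
Qed.

End SymmetricDifference.

Section Cocycles.
Variables (n : nat) (Z : lmodType 'F_2).
Implicit Types (f h : {set 'I_n} -> {set 'I_n} -> Z) (s : {set 'I_n}) (i : 'I_n).

Lemma coboundary_cocycle f : coboundary f -> cocycle f.
Proof.
case=> g [g0 f_delta] v1 v2; rewrite !f_delta /delta; split.
- by rewrite vadd0s g0 addr0 addrr_F2.
- by rewrite vaddss g0 add0r addrr_F2.
- by rewrite vaddC -!addrA (addrC (g v1)).
- by rewrite vaddK (addrC (g v1)).
Qed.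

Lemma cocycleB f h : cocycle f -> cocycle h -> cocycle (fun v1 v2 => f v1 v2 - h v1 v2).
Proof.
move=> cf ch v1 v2; case: (cf v1 v2) => [f1 f2 f3 f4]; case: (ch v1 v2) => [h1 h2 h3 h4].
by split; [rewrite f1 h1 subrr | rewrite f2 h2 subrr | rewrite f3 h3 | rewrite f4 h4].
Qed.

Definition prefix_cochain f s : Z :=
  \sum_(i in s) f [set j in s | (j < i)%N] [set i].

Lemma prefix_cochain0 f : prefix_cochain f set0 = 0.
Proof. by rewrite /prefix_cochain big_set0. Qed.

Lemma prefix_cochain_set1 f i : cocycle f -> prefix_cochain f [set i] = 0.
Proof.
move=> cf; rewrite /prefix_cochain big_set1.
have -> : [set j in [set i] | (j < i)%N] = set0.
  by apply/setP => j; rewrite !inE; case: eqVneq => [->|]; rewrite ?ltnn.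
by case: (cf [set i] [set i]).
Qed.

Lemma prefix_cochainU1 f s i : {in s, forall j : 'I_n, (j < i)%N} ->
  prefix_cochain f (i |: s) = f s [set i] + prefix_cochain f s.
Proof.
move=> lt_s; have si := below_notin lt_s.
rewrite /prefix_cochain (big_setU1 _ si) /=; congr (f _ _ + _).
  apply/setP => j; rewrite !inE; case: eqVneq => [->|_] /=; first by rewrite ltnn (negbTE si).
  by case js: (j \in s); rewrite //= lt_s.
apply: eq_bigr => k ks; congr (f _ _); apply/setP => j; rewrite !inE.
by case: eqVneq => [->|] //=; rewrite (negbTE si) ltnNge ltnW ?lt_s.
Qed.

Lemma delta_prefix_cochain_set1 f s i : cocycle f ->
  {in s, forall j : 'I_n, (j < i)%N} -> delta (prefix_cochain f) s [set i] = f s [set i].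
Proof.
move=> cf lt_s; rewrite /delta vadd_set1 ?below_notin // prefix_cochainU1 //.
by rewrite prefix_cochain_set1 // addr0 -addrA addrr_F2 addr0.
Qed.

Lemma additive_cochain_sum (g : {set 'I_n} -> Z) : g set0 = 0 ->
  (forall s i, {in s, forall j : 'I_n, (j < i)%N} -> g (i |: s) = g s + g [set i]) ->
  forall s, g s = \sum_(j in s) g [set j].
Proof.
move=> g0 gU1; apply: set_ind_max => [|s i lt_s gs]; first by rewrite g0 big_set0.
by rewrite gU1 // gs big_setU1 ?below_notin //= addrC.
Qed.

Lemma delta_sum_set1 (g : {set 'I_n} -> Z) v1 v2 :
  delta (fun s => \sum_(j in s) g [set j]) v1 v2 = 0.
Proof.
rewrite /delta !(big_mkcond (fun j => j \in _)) -!big_split big1 // => j _ /=.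
rewrite !inE; case: (j \in v1); case: (j \in v2);
  by rewrite /= ?addr0 ?add0r ?addrr_F2.
Qed.

Lemma cocycle0_coboundary_eq0 f : cocycle0 f -> coboundary f -> forall v1 v2, f v1 v2 = 0.
Proof.
move=> [_ f0_top] [g [g0 f_delta]].
have gU1 s i : {in s, forall j : 'I_n, (j < i)%N} -> g (i |: s) = g s + g [set i].
  move=> lt_s; have [->|s0] := eqVneq s set0; first by rewrite setU0 g0 add0r.
  have := f0_top s i s0 (introT (bigmax_ltP i s0) lt_s).
  rewrite f_delta /delta vadd_set1 ?below_notin // -addrA => /eqP.
  by rewrite addr_eq0 oppr_F2 => /eqP.
move=> v1 v2; rewrite f_delta -(delta_sum_set1 g v1 v2).
by rewrite /delta !(additive_cochain_sum g0 gU1).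
Qed.

End Cocycles.

Theorem mainTheorem2 (n : nat) (Z : lmodType 'F_2) : (0 < n)%N ->
  [/\ (forall f : {set 'I_n} -> {set 'I_n} -> Z, coboundary f -> cocycle f),
      (forall f : {set 'I_n} -> {set 'I_n} -> Z, cocycle f ->
         exists f0 b : {set 'I_n} -> {set 'I_n} -> Z,
           [/\ cocycle0 f0, coboundary b & forall v1 v2, f v1 v2 = f0 v1 v2 + b v1 v2])
    & (forall f : {set 'I_n} -> {set 'I_n} -> Z,
         cocycle0 f -> coboundary f -> forall v1 v2, f v1 v2 = 0)].
Proof.
move=> _; split; [exact: coboundary_cocycle | | exact: cocycle0_coboundary_eq0].
move=> f cf; pose g := prefix_cochain f.
have dg : coboundary (delta g) by exists g; split; first exact: prefix_cochain0.
exists (fun v1 v2 => f v1 v2 - delta g v1 v2), (delta g).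
split=> //; last by move=> v1 v2; rewrite subrK.
split; first exact: cocycleB cf (coboundary_cocycle dg).
move=> s i s0 /(bigmax_ltP i s0) lt_s.
by rewrite delta_prefix_cochain_set1 // subrr.
Qed.
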